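(* Let $0<q<\tfrac13$, $\lambda>1$, $\Theta=(1/q)^{1/\lambda}$, and let $(\mathcal{Q}_n)_{n\in\mathbb{N}^+}$ be a sequence with $\mathcal{Q}_n\in10\mathbb{N}^+$, $\mathcal{Q}_{n+1}/\mathcal{Q}_n\in10\mathbb{N}^+$ for all $n$, and $\ell_1\exp(\Theta^n)\le\mathcal{Q}_n\le\ell_2\exp(\Theta^n)$ for some constants $0<\ell_1\le\ell_2$. Define \[ \mathscr{P}_{\mathscr{H}}(x_1,x_2,y_1,y_2)=\sum_{n=1}^\infty\frac{q^n}{\mathcal{Q}_n^6}\sin(\pi\mathcal{Q}_nx_1)+\sum_{n=1}^\infty\frac{q^n}{\mathcal{Q}_n^6}\sin(\pi\mathcal{Q}_ny_2). \] Then $\mathscr{P}_{\mathscr{H}}\in C^6(\mathbb{R}^4)$, and all its partial derivatives of order $6$ are $\lambda$-Logarithmic Hölder continuous: there are $C>0$ and $h_0\in(0,1)$ such that $|\partial^\alpha\mathscr{P}_{\mathscr{H}}(z+h)-\partial^\alpha\mathscr{P}_{\mathscr{H}}(z)|\le C(-\ln|h|)^{-\lambda}$ for all $|\alpha|=6$, $z\in\mathbb{R}^4$ and $0<|h|\le h_0$. However, the $6$-th order derivatives are nowhere Hölder continuous; more precisely, for $\mathscr{P}(x):=\sum_{n=1}^\infty q^n\sin(\pi\mathcal{Q}_nx)$ (so that $\partial_{x_1}^6\mathscr{P}_{\mathscr{H}}=-\pi^6\mathscr{P}(x_1)$), for every $x\in\mathbb{R}$ and every $\alpha\in(0,1)$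 there is a sequence $\upsilon_m\to0$, $\upsilon_m\ne0$, with \[ \lim_{m\to\infty}\frac{|\mathscr{P}(x+\upsilon_m)-\mathscr{P}(x)|}{|\upsilon_m|^\alpha}=+\infty. \]
   Context: $|\cdot|$ is the sup-norm on $\mathbb{R}^4$. *)

From Stdlib Require Import Reals Lra List.
From Coquelicot Require Import Coquelicot.
Open Scope R_scope.

(* Points of R^4, written (x1, x2, y1, y2) as a left-nested tuple. *)
Definition pt4 : Type := (R * R * R * R)%type.

Definition coord (p : pt4) (i : nat) : R :=
  match p with (a, b, c, d) =>
    match i with 0%nat => a | 1%nat => b | 2%nat => c | _ => d end end.

Definition upd (p : pt4) (i : nat) (t : R) : pt4 :=
  match p with (a, b, c, d) =>
    match i with
    | 0%nat => (t, b, c, d) | 1%nat => (a, t, c, d)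
    | 2%nat => (a, b, t, d) | _ => (a, b, c, t) end end.

Definition add4 (p h : pt4) : pt4 :=
  match p, h with (a, b, c, d), (a', b', c', d') =>
    (a + a', b + b', c + c', d + d') end.

Definition supnorm (h : pt4) : R :=
  match h with (a, b, c, d) =>
    Rmax (Rmax (Rabs a) (Rabs b)) (Rmax (Rabs c) (Rabs d)) end.

Definition dist4 (p p' : pt4) : R :=
  match p, p' with (a, b, c, d), (a', b', c', d') =>
    supnorm (a - a', b - b', c - c', d - d') end.

Definition pderiv (i : nat) (f : pt4 -> R) (p : pt4) : R :=
  Derive (fun t => f (upd p i t)) (coord p i).

(* iterated partial derivative along the word w = [i1; ...; ik]:
   d_{i1} d_{i2} ... d_{ik} f.  A multi-index alpha with |alpha| = k
   corresponds to any word of length k with the right letter counts. *)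
Definition iter_pd (w : list nat) (f : pt4 -> R) : pt4 -> R :=
  List.fold_right (fun (i : nat) (g : pt4 -> R) => pderiv i g) f w.

Definition valid_word (w : list nat) : Prop := List.Forall (fun i => (i < 4)%nat) w.

Definition continuous4 (g : pt4 -> R) : Prop :=
  forall p eps, 0 < eps -> exists delta, 0 < delta /\
    forall p', dist4 p' p < delta -> Rabs (g p' - g p) < eps.

Definition C_k4 (k : nat) (f : pt4 -> R) : Prop :=
  (forall w i p, valid_word w -> (length w < k)%nat -> (i < 4)%nat ->
     ex_derive (fun t => iter_pd w f (upd p i t)) (coord p i)) /\
  (forall w, valid_word w -> (length w <= k)%nat -> continuous4 (iter_pd w f)).

Definition series1 (a : nat -> R) : R := Series (fun k => a (S k)).

Definition Pfun (q : R) (Q : nat -> nat) (x : R) : R :=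
  series1 (fun n => q ^ n * sin (PI * INR (Q n) * x)).

Definition PH (q : R) (Q : nat -> nat) (p : pt4) : R :=
  series1 (fun n => q ^ n / INR (Q n) ^ 6 * sin (PI * INR (Q n) * coord p 0)) +
  series1 (fun n => q ^ n / INR (Q n) ^ 6 * sin (PI * INR (Q n) * coord p 3)).

From Stdlib Require Import Reals List Lra Lia.
From Coquelicot Require Import Coquelicot.
Open Scope R_scope.

(* P_H is separable:  P_H (x1, x2, y1, y2) = F_0 (x1) + F_0 (y2)  with
   F_0 (x) = sum_j q^j Q_j^(-6) sin (pi Q_j x).  Its k-th termwise derivative
   F_k is a normally convergent sine series for k <= 6, so termwise
   differentiation gives F_(k+1) = F_k'; every iterated partial derivative of
   order k <= 6 is then  [w only uses x1] F_k (x1) + [w only uses y2] F_k (y2),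
   whence P_H is C^6, and F_6 = -pi^6 P with P the lacunary series
   sum_j q^j sin (pi Q_j x).  Everything therefore reduces to two properties
   of the lacunary series with frequencies b_j = Q_(j+1):
   - log-Hoelder bound: split the increment at the index M where
     Theta^M ~ -ln|t|/2; low frequencies move by O(|t| b_M), high ones by
     O(q^M), and both are O((-ln|t|)^(-lambda));
   - nowhere Hoelder: along t_m = +-2/(5 b_(m+1)) all frequencies beyond m+1
     are periodic, the (m+1)-th term moves by >= q^(m+2)/4 for a good sign,
     and the lower ones are negligible, while |t_m|^alpha decays like
     exp(-alpha Theta^(m+2)), which beats q^(m+2) = (Theta^(m+2))^(-lambda). *)

Lemma series_cvu (fn : nat -> R -> R) (M : nat -> R) (x : R) :
  (forall n y, Rabs (fn n y) <= M n) -> ex_series M ->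
  exists e : posreal, CVU (SP fn) (fun y => Series (fun n => fn n y)) x e.
Proof.
  intros HM HS.
  assert (Hpos : forall n, 0 <= M n).
  { intro n. eapply Rle_trans; [apply Rabs_pos | apply (HM n 0)]. }
  assert (HSabs : ex_series (fun k => Rabs (M k))).
  { eapply ex_series_ext; [|exact HS]. intro n. rewrite Rabs_pos_eq; auto. }
  assert (Hr : 0 < Rabs x + 1) by (pose proof (Rabs_pos x); lra).
  set (r := mkposreal _ Hr).
  assert (Hcvn : CVN_r fn r).
  { exists M, (Series (fun k => Rabs (M k))). split.
    - apply is_lim_seq_Reals. eapply is_lim_seq_ext.
      2: apply (Series_correct _ HSabs). intro n. apply sum_n_Reals.
    - intros n y _. apply HM. }
  apply (CVN_CVU_r fn r Hcvn x). simpl. lra.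
Qed.

Lemma ex_series_Rabs_le (a b : nat -> R) :
  (forall n, Rabs (a n) <= b n) -> ex_series b -> ex_series a.
Proof. intros H Hb. apply (@ex_series_le R_AbsRing R_CompleteNormedModule _ b); auto. Qed.

Lemma SP_continuity (fn : nat -> R -> R) :
  (forall n y, continuity_pt (fn n) y) -> forall N y, continuity_pt (SP fn N) y.
Proof.
  intros H N. induction N as [|N IH]; intro y; unfold SP; simpl.
  - apply H.
  - apply (continuity_pt_plus (fun x => sum_f_R0 (fun k => fn k x) N) (fn (S N))); auto.
Qed.

Lemma SP_is_derive (fn fn' : nat -> R -> R) :
  (forall n y, is_derive (fn n) y (fn' n y)) ->
  forall N y, is_derive (SP fn N) y (SP fn' N y).
Proof.
  intros H N. induction N as [|N IH]; intro y; unfold SP; simpl.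
  - apply H.
  - apply (is_derive_plus (fun x => sum_f_R0 (fun k => fn k x) N) (fn (S N))); auto.
Qed.

Lemma series_continuity (fn : nat -> R -> R) (M : nat -> R) (x : R) :
  (forall n y, continuity_pt (fn n) y) ->
  (forall n y, Rabs (fn n y) <= M n) -> ex_series M ->
  continuity_pt (fun y => Series (fun n => fn n y)) x.
Proof.
  intros Hc HM HS. destruct (series_cvu fn M x HM HS) as [e He].
  apply (CVU_continuity _ _ x e He).
  - intros n y _. apply SP_continuity. exact Hc.
  - unfold Boule. rewrite Rminus_diag, Rabs_R0. apply cond_pos.
Qed.

Lemma series_is_derive (fn fn' : nat -> R -> R) (M M' : nat -> R) (x : R) :
  (forall n y, is_derive (fn n) y (fn' n y)) ->
  (forall n y, continuity_pt (fn' n) y) ->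
  (forall n y, Rabs (fn n y) <= M n) -> ex_series M ->
  (forall n y, Rabs (fn' n y) <= M' n) -> ex_series M' ->
  is_derive (fun y => Series (fun n => fn n y)) x (Series (fun n => fn' n x)).
Proof.
  intros Hd Hc HM HS HM' HS'.
  destruct (series_cvu fn' M' x HM' HS') as [e He].
  apply is_derive_Reals.
  apply (Ranalysis5.derivable_pt_lim_CVU (SP fn) (SP fn')
           (fun y => Series (fun n => fn n y)) (fun y => Series (fun n => fn' n y)) x x e).
  - unfold Boule. rewrite Rminus_diag, Rabs_R0. apply cond_pos.
  - intros y n _. apply is_derive_Reals. apply SP_is_derive. exact Hd.
  - intros y _. apply is_lim_seq_Reals. eapply is_lim_seq_ext.
    2: apply (Series_correct _ (ex_series_Rabs_le _ M (fun n => HM n y) HS)).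
    intro n. apply sum_n_Reals.
  - exact He.
  - intros y _. apply (series_continuity fn' M'); auto.
Qed.

(* The k-th derivative of  a_j sin (w_j x)  is  a_j w_j^k sin (w_j x + k pi/2). *)
Definition sine_term (a w : nat -> R) (k j : nat) (x : R) : R :=
  a j * w j ^ k * sin (w j * x + INR k * (PI / 2)).

Definition sine_series (a w : nat -> R) (k : nat) (x : R) : R :=
  Series (fun j => sine_term a w k j x).

Lemma sine_term_is_derive a w k j x :
  is_derive (sine_term a w k j) x (sine_term a w (S k) j x).
Proof.
  unfold sine_term. auto_derive; auto.
  rewrite S_INR.
  replace (w j * x + (INR k + 1) * (PI / 2)) with
    ((w j * x + INR k * (PI / 2)) + PI / 2) by ring.
  rewrite sin_plus, sin_PI2, cos_PI2. simpl. ring.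
Qed.

Lemma sine_term_bound a w k j x : Rabs (sine_term a w k j x) <= Rabs (a j * w j ^ k).
Proof.
  unfold sine_term. rewrite Rabs_mult.
  rewrite <- (Rmult_1_r (Rabs (a j * w j ^ k))) at 2.
  apply Rmult_le_compat_l; [apply Rabs_pos | apply Rabs_le, SIN_bound].
Qed.

Lemma sine_term_continuity a w k j x : continuity_pt (sine_term a w k j) x.
Proof.
  apply derivable_continuous_pt. exists (sine_term a w (S k) j x).
  apply is_derive_Reals, sine_term_is_derive.
Qed.

Lemma sine_series_is_derive a w k x :
  ex_series (fun j => Rabs (a j * w j ^ k)) ->
  ex_series (fun j => Rabs (a j * w j ^ S k)) ->
  is_derive (sine_series a w k) x (sine_series a w (S k) x).
Proof.
  intros Hk HSk.
  apply (series_is_derive _ _ _ _ x (sine_term_is_derive a w k)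
           (sine_term_continuity a w (S k)) (sine_term_bound a w k) Hk
           (sine_term_bound a w (S k)) HSk).
Qed.

Lemma sine_series_continuity a w k x :
  ex_series (fun j => Rabs (a j * w j ^ k)) -> continuity_pt (sine_series a w k) x.
Proof.
  intro Hk.
  apply (series_continuity _ _ x (sine_term_continuity a w k) (sine_term_bound a w k) Hk).
Qed.

(* Multiplicity of a word w in the single direction c: 1 if every letter of w
   is c, and 0 otherwise.  A function of coordinate c alone is killed by any
   partial derivative in another direction. *)
Fixpoint word_weight (c : nat) (w : list nat) : R :=
  match w with nil => 1 | i :: w' => if Nat.eqb i c then word_weight c w' else 0 end.

Lemma word_weight_01 c w : word_weight c w = 0 \/ word_weight c w = 1.
Proof. induction w as [|i w IH]; simpl; auto. destruct (Nat.eqb i c); auto. Qed.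

Section Separable.

Variables (n : nat) (f : pt4 -> R) (F : nat -> R -> R).
Hypothesis F_deriv : forall k x, (k < n)%nat -> is_derive (F k) x (F (S k) x).
Hypothesis f_sep : forall p, f p = F 0%nat (coord p 0) + F 0%nat (coord p 3).

Lemma separable_pderiv k (A B : R) i p :
  (k < n)%nat -> (i < 4)%nat ->
  is_derive (fun t => A * F k (coord (upd p i t) 0) + B * F k (coord (upd p i t) 3))
    (coord p i)
    ((if Nat.eqb i 0 then A else 0) * F (S k) (coord p 0) +
     (if Nat.eqb i 3 then B else 0) * F (S k) (coord p 3)).
Proof.
  intros Hk Hi. destruct p as [[[a b] c] d].
  assert (HF := fun x => F_deriv k x Hk).
  destruct i as [|[|[|[|i]]]]; simpl; try lia.
  - replace (A * F (S k) a + 0 * F (S k) d) with (A * F (S k) a + 0) by ring.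
    apply (is_derive_plus (fun t => A * F k t) (fun _ => B * F k d)).
    + apply is_derive_scal, HF.
    + apply (@is_derive_const R_AbsRing).
  - replace (0 * F (S k) a + 0 * F (S k) d) with 0 by ring. apply (@is_derive_const R_AbsRing).
  - replace (0 * F (S k) a + 0 * F (S k) d) with 0 by ring. apply (@is_derive_const R_AbsRing).
  - replace (0 * F (S k) a + B * F (S k) d) with (0 + B * F (S k) d) by ring.
    apply (is_derive_plus (fun _ => A * F k a) (fun t => B * F k t)).
    + apply (@is_derive_const R_AbsRing).
    + apply is_derive_scal, HF.
Qed.

Lemma iter_pd_separable w p :
  valid_word w -> (length w <= n)%nat ->
  iter_pd w f p = word_weight 0 w * F (length w) (coord p 0)
                + word_weight 3 w * F (length w) (coord p 3).
Proof.
  revert p. induction w as [|i w IH]; intros p Hv Hl.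
  - simpl. rewrite f_sep. ring.
  - inversion Hv as [|i' w' Hi Hw]; subst. simpl in Hl.
    simpl iter_pd. unfold pderiv.
    rewrite (Derive_ext _ (fun t => word_weight 0 w * F (length w) (coord (upd p i t) 0) +
                                    word_weight 3 w * F (length w) (coord (upd p i t) 3))).
    2: { intro t. apply IH; auto; lia. }
    apply is_derive_unique. simpl length. simpl word_weight.
    assert (Hs := separable_pderiv (length w) (word_weight 0 w) (word_weight 3 w) i p
                    ltac:(lia) Hi).
    destruct (Nat.eqb i 0), (Nat.eqb i 3); exact Hs.
Qed.

Lemma coord_dist4 p' p :
  Rabs (coord p' 0 - coord p 0) <= dist4 p' p /\ Rabs (coord p' 3 - coord p 3) <= dist4 p' p.
Proof.
  destruct p' as [[[a b] c] d]; destruct p as [[[a' b'] c'] d']; cbn [dist4 supnorm coord].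
  split.
  - apply Rle_trans with (Rmax (Rabs (a - a')) (Rabs (b - b'))); apply Rmax_l.
  - apply Rle_trans with (Rmax (Rabs (c - c')) (Rabs (d - d'))); apply Rmax_r.
Qed.

Lemma iter_pd_separable_increment w p p' :
  valid_word w -> (length w <= n)%nat ->
  Rabs (iter_pd w f p' - iter_pd w f p) <=
    Rabs (F (length w) (coord p' 0) - F (length w) (coord p 0)) +
    Rabs (F (length w) (coord p' 3) - F (length w) (coord p 3)).
Proof.
  intros Hv Hl. rewrite !(iter_pd_separable w _ Hv Hl).
  set (D0 := F (length w) (coord p' 0) - F (length w) (coord p 0)).
  set (D3 := F (length w) (coord p' 3) - F (length w) (coord p 3)).
  replace (_ - _) with (word_weight 0 w * D0 + word_weight 3 w * D3)
    by (unfold D0, D3; ring).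
  eapply Rle_trans; [apply Rabs_triang|]. rewrite !Rabs_mult.
  pose proof (Rabs_pos D0); pose proof (Rabs_pos D3).
  destruct (word_weight_01 0 w) as [-> | ->]; destruct (word_weight_01 3 w) as [-> | ->];
    rewrite ?Rabs_R0, ?Rabs_R1; lra.
Qed.

Lemma separable_C_k4 :
  (forall k x, (k <= n)%nat -> continuity_pt (F k) x) -> C_k4 n f.
Proof.
  intros HC. split.
  - intros w i p Hv Hl Hi. eapply ex_derive_ext.
    { intro t. symmetry. apply (iter_pd_separable w _ Hv ltac:(lia)). }
    eexists. apply separable_pderiv; auto.
  - intros w Hv Hl p eps He.
    assert (Hpt : forall x, exists d, 0 < d /\ forall y, Rabs (y - x) < d ->
                    Rabs (F (length w) y - F (length w) x) < eps / 2).
    { intro x. destruct (HC (length w) x Hl (eps / 2) ltac:(lra)) as [d [Hd Hx]].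
      exists d. split; auto. intros y Hy.
      destruct (Req_dec y x) as [-> | Hne].
      - rewrite Rminus_diag, Rabs_R0. lra.
      - apply (Hx y). unfold D_x, no_cond, R_dist. repeat split; auto. }
    destruct (Hpt (coord p 0)) as [d0 [Hd0 H0]], (Hpt (coord p 3)) as [d3 [Hd3 H3]].
    exists (Rmin d0 d3). split; [apply Rmin_pos; auto|].
    intros p' Hp'. destruct (coord_dist4 p' p) as [E0 E3].
    pose proof (Rmin_l d0 d3); pose proof (Rmin_r d0 d3).
    eapply Rle_lt_trans; [apply (iter_pd_separable_increment w p p' Hv Hl)|].
    assert (A0 := H0 (coord p' 0) ltac:(lra)). assert (A3 := H3 (coord p' 3) ltac:(lra)).
    lra.
Qed.

End Separable.

Definition lacunary (q : R) (b : nat -> R) (x : R) : R :=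
  Series (fun j => q ^ S j * sin (PI * b j * x)).

Lemma pow_unit_interval q n : 0 <= q <= 1 -> 0 <= q ^ n <= 1.
Proof. intros Hq. induction n; simpl; nra. Qed.

Lemma ex_series_geom_succ q : 0 < q < 1 -> ex_series (fun j => q ^ S j).
Proof.
  intros Hq. apply (ex_series_ext (fun j => q * q ^ j)); [reflexivity|].
  apply (@ex_series_scal_l R_AbsRing R_NormedModule).
  apply ex_series_geom. rewrite Rabs_pos_eq; lra.
Qed.

Lemma sin_lipschitz u v : Rabs (sin u - sin v) <= Rabs (u - v).
Proof.
  destruct (MVT_abs sin cos v u) as [c [Hc _]].
  { intros c _. apply derivable_pt_lim_sin. }
  rewrite Hc. rewrite <- (Rmult_1_l (Rabs (u - v))) at 2.
  apply Rmult_le_compat_r; [apply Rabs_pos | apply Rabs_le, COS_bound].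
Qed.

Section Lacunary.

Variables (q : R) (b : nat -> R).
Hypothesis q_range : 0 < q < 1.
Hypothesis b_nonneg : forall j, 0 <= b j.
Hypothesis b_growth : forall j, 10 * b j <= b (S j).

Definition lac_incr (x t : R) (j : nat) : R :=
  q ^ S j * (sin (PI * b j * (x + t)) - sin (PI * b j * x)).

Lemma lac_incr_coarse x t j : Rabs (lac_incr x t j) <= 2 * q ^ S j.
Proof.
  unfold lac_incr. rewrite Rabs_mult.
  pose proof (pow_unit_interval q (S j) ltac:(lra)). rewrite (Rabs_pos_eq (q ^ S j)) by lra.
  pose proof (SIN_bound (PI * b j * (x + t))); pose proof (SIN_bound (PI * b j * x)).
  assert (Rabs (sin (PI * b j * (x + t)) - sin (PI * b j * x)) <= 2) by (apply Rabs_le; lra).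
  nra.
Qed.

Lemma lac_incr_lipschitz x t j : Rabs (lac_incr x t j) <= PI * Rabs t * b j.
Proof.
  unfold lac_incr. rewrite Rabs_mult.
  pose proof (pow_unit_interval q (S j) ltac:(lra)). rewrite (Rabs_pos_eq (q ^ S j)) by lra.
  pose proof (sin_lipschitz (PI * b j * (x + t)) (PI * b j * x)) as Hsin.
  replace (PI * b j * (x + t) - PI * b j * x) with (PI * b j * t) in Hsin by ring.
  rewrite Rabs_mult, Rabs_mult, (Rabs_pos_eq PI), (Rabs_pos_eq (b j)) in Hsin
    by (auto; pose proof PI_RGT_0; lra).
  pose proof (Rabs_pos (sin (PI * b j * (x + t)) - sin (PI * b j * x))). nra.
Qed.

Lemma ex_series_lac_incr x t : ex_series (lac_incr x t).
Proof.
  apply (ex_series_Rabs_le _ (fun j => 2 * q ^ S j)); [apply lac_incr_coarse|].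
  apply (@ex_series_scal_l R_AbsRing R_NormedModule), ex_series_geom_succ; lra.
Qed.

Lemma lacunary_increment x t :
  lacunary q b (x + t) - lacunary q b x = Series (lac_incr x t).
Proof.
  assert (Hex : forall y, ex_series (fun j => q ^ S j * sin (PI * b j * y))).
  { intro y. apply (ex_series_Rabs_le _ (fun j => q ^ S j)); [|apply ex_series_geom_succ; lra].
    intro n. rewrite Rabs_mult. pose proof (pow_unit_interval q (S n) ltac:(lra)).
    rewrite (Rabs_pos_eq (q ^ S n)) by lra.
    assert (Rabs (sin (PI * b n * y)) <= 1) by (apply Rabs_le, SIN_bound). nra. }
  unfold lacunary. rewrite <- Series_minus by auto.
  apply Series_ext. intro j. unfold lac_incr. ring.
Qed.

(* Since b grows at least geometrically with ratio 10, a partial sum of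
   b is at most twice its last term. *)
Lemma partial_sum_growth m : sum_f_R0 b m <= 2 * b m.
Proof.
  induction m as [|m IH]; simpl; [pose proof (b_nonneg 0); lra|].
  pose proof (b_growth m); pose proof (b_nonneg m). lra.
Qed.

Lemma lac_incr_head x t m : Rabs (sum_f_R0 (lac_incr x t) m) <= 2 * PI * Rabs t * b m.
Proof.
  eapply Rle_trans; [apply sum_f_R0_triangle|].
  apply Rle_trans with (sum_f_R0 (fun j => b j * (PI * Rabs t)) m).
  { apply sum_Rle. intros n _. rewrite Rmult_comm. apply lac_incr_lipschitz. }
  rewrite <- scal_sum. pose proof (partial_sum_growth m).
  assert (0 <= PI * Rabs t) by (pose proof PI_RGT_0; pose proof (Rabs_pos t); nra). nra.
Qed.

Lemma lac_incr_tail x t M :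
  Rabs (Series (fun k => lac_incr x t (S M + k))) <= 2 / (1 - q) * q ^ S M.
Proof.
  assert (Hgeo : ex_series (fun k => 2 * q ^ S (S M) * q ^ k)).
  { apply (@ex_series_scal_l R_AbsRing R_NormedModule), ex_series_geom.
    rewrite Rabs_pos_eq; lra. }
  assert (Hdom : forall k, Rabs (lac_incr x t (S M + k)) <= 2 * q ^ S (S M) * q ^ k).
  { intro k. rewrite Rmult_assoc, <- pow_add. apply lac_incr_coarse. }
  eapply Rle_trans.
  { apply Series_Rabs. apply (ex_series_Rabs_le _ _ ltac:(intro k; rewrite Rabs_Rabsolu; apply Hdom) Hgeo). }
  eapply Rle_trans; [apply Series_le; [intro k; split; [apply Rabs_pos | apply Hdom] | exact Hgeo]|].
  rewrite Series_scal_l, Series_geom by (rewrite Rabs_pos_eq; lra).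
  replace (q ^ S (S M)) with (q * q ^ S M) by (simpl; ring).
  pose proof (pow_unit_interval q (S M) ltac:(lra)).
  apply Rle_trans with (2 * q ^ S M * / (1 - q)); [|right; field; lra].
  apply Rmult_le_compat_r; [left; apply Rinv_0_lt_compat; lra | nra].
Qed.

Lemma lacunary_increment_upper x t M :
  Rabs (lacunary q b (x + t) - lacunary q b x) <=
    2 * PI * Rabs t * b M + 2 / (1 - q) * q ^ S M.
Proof.
  rewrite lacunary_increment, (Series_incr_n _ (S M)) by (auto using ex_series_lac_incr; lia).
  simpl pred. eapply Rle_trans; [apply Rabs_triang|].
  apply Rplus_le_compat; [apply lac_incr_head | apply lac_incr_tail].
Qed.

Lemma lac_incr_period x t j (N : nat) :
  b j * t = 2 * INR N \/ b j * t = - (2 * INR N) -> lac_incr x t j = 0.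
Proof.
  intros Ht. unfold lac_incr.
  replace (PI * b j * (x + t)) with (PI * b j * x + PI * (b j * t)) by ring.
  destruct Ht as [-> | ->].
  - replace (PI * (2 * INR N)) with (2 * INR N * PI) by ring. rewrite sin_period. ring.
  - set (th := PI * b j * x).
    replace th with ((th + PI * - (2 * INR N)) + 2 * INR N * PI) at 2 by ring.
    rewrite sin_period. ring.
Qed.

Lemma lacunary_increment_lower x t m :
  (forall k, lac_incr x t (S (S m) + k) = 0) ->
  Rabs (lac_incr x t (S m)) - 2 * PI * Rabs t * b m <=
    Rabs (lacunary q b (x + t) - lacunary q b x).
Proof.
  intros Hzero.
  rewrite lacunary_increment, (Series_incr_n _ (S (S m))) by (auto using ex_series_lac_incr; lia).
  rewrite (Series_ext _ (fun _ => 0 * 0)) by (intro k; rewrite Hzero; ring).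
  rewrite Series_scal_l, Rmult_0_l, Rplus_0_r. simpl pred. rewrite tech5.
  pose proof (lac_incr_head x t m).
  pose proof (Rabs_triang_inv (lac_incr x t (S m)) (- sum_f_R0 (lac_incr x t) m)) as T.
  rewrite Rabs_Ropp in T.
  replace (lac_incr x t (S m) - - sum_f_R0 (lac_incr x t) m) with
    (sum_f_R0 (lac_incr x t) m + lac_incr x t (S m)) in T by ring.
  lra.
Qed.

End Lacunary.

Lemma exp_monotone x y : x <= y -> exp x <= exp y.
Proof.
  intro H. destruct (Rle_lt_or_eq_dec _ _ H) as [H' | ->]; [left; apply exp_increasing|]; lra.
Qed.

Lemma power_le_exp (c lam : R) : 0 < c -> exists K, 0 < K /\
  forall y, 1 <= y -> exp (lam * ln y) <= K * exp (c * y).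
Proof.
  intros Hc. destruct (INR_archimed 1 lam ltac:(lra)) as [m Hm]. rewrite Rmult_1_r in Hm.
  assert (Hcm : 0 < c ^ m) by (apply pow_lt; auto).
  assert (Hf : 0 < INR (Factorial.fact m)) by (apply lt_0_INR, Factorial.lt_O_fact).
  exists (INR (Factorial.fact m) / c ^ m). split; [apply Rdiv_lt_0_compat; auto|].
  intros y Hy.
  assert (Hl : 0 <= ln y) by (rewrite <- ln_1; apply ln_le; lra).
  apply Rle_trans with (exp (INR m * ln y)); [apply exp_monotone, Rmult_le_compat_r; lra|].
  change (exp (INR m * ln y)) with (Rpower y (INR m)). rewrite Rpower_pow by lra.
  (* one term of the Taylor expansion of exp (c y) *)
  assert (T : (c * y) ^ m / INR (Factorial.fact m) <= exp (c * y)).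
  { apply Rle_trans with (sum_f_R0 (fun k => (c * y) ^ k / INR (Factorial.fact k)) m).
    2: { apply exp_ge_taylor. nra. }
    destruct m; [simpl; lra|].
    rewrite tech5.
    assert (0 <= sum_f_R0 (fun k => (c * y) ^ k / INR (Factorial.fact k)) m).
    { apply cond_pos_sum. intro k. apply Rdiv_le_0_compat.
      - apply pow_le. nra.
      - apply lt_0_INR, Factorial.lt_O_fact. }
    lra. }
  rewrite Rpow_mult_distr in T. apply Rcomplements.Rle_div_l in T; auto.
  replace (INR (Factorial.fact m) / c ^ m * exp (c * y)) with
    ((exp (c * y) * INR (Factorial.fact m)) / c ^ m) by (field; lra).
  apply Rcomplements.Rle_div_r; auto. lra.
Qed.

Lemma power_bracket (Th z : R) : 1 < Th -> Th <= z ->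
  exists N, (1 <= N)%nat /\ Th ^ N <= z < Th ^ S N.
Proof.
  intros HT Hz.
  assert (Hind : forall n, z < Th ^ S n -> exists N, (1 <= N)%nat /\ Th ^ N <= z < Th ^ S N).
  { induction n as [|n IH]; intros Hn; [simpl in Hn; lra|].
    destruct (Rlt_le_dec z (Th ^ S n)) as [Hlt | Hge]; [exact (IH Hlt)|].
    exists (S n). split; [lia | lra]. }
  pose proof (proj2 (is_lim_seq_spec _ _) (is_lim_seq_geom_p Th HT)) as Hlim.
  destruct (Hlim z) as [n Hn]. apply (Hind n), Hn. lia.
Qed.

Lemma ln_theta q lambda : 0 < q < 1 -> 0 < lambda ->
  lambda * ln (Rpower (1 / q) (1 / lambda)) = - ln q.
Proof.
  intros Hq Hl. unfold Rpower. rewrite ln_exp.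
  unfold Rdiv. rewrite !Rmult_1_l, ln_Rinv by lra. field. lra.
Qed.

Lemma theta_gt1 q lambda : 0 < q < 1 -> 0 < lambda -> 1 < Rpower (1 / q) (1 / lambda).
Proof.
  intros Hq Hl. unfold Rpower.
  assert (0 < 1 / lambda * ln (1 / q)).
  { apply Rmult_lt_0_compat; [apply Rdiv_lt_0_compat; lra|].
    rewrite <- ln_1. apply ln_increasing; [lra|]. apply Rcomplements.Rlt_div_r; lra. }
  rewrite <- exp_0 at 1. apply exp_increasing. lra.
Qed.

Lemma q_pow_theta q lambda n : 0 < q < 1 -> 0 < lambda ->
  q ^ n = / exp (lambda * ln (Rpower (1 / q) (1 / lambda) ^ n)).
Proof.
  intros Hq Hl. rewrite <- exp_Ropp, <- (Rpower_pow n q) by lra.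
  pose proof (theta_gt1 q lambda Hq Hl).
  unfold Rpower at 1. f_equal. rewrite ln_pow by lra.
  replace (lambda * (INR n * _)) with (INR n * (lambda * ln (Rpower (1 / q) (1 / lambda))))
    by ring.
  rewrite ln_theta; auto. ring.
Qed.

Section LogHoelder.

Variables (q lambda l2 : R) (b : nat -> R).
Hypothesis q_range : 0 < q < 1.
Hypothesis lambda_pos : 0 < lambda.
Hypothesis b_nonneg : forall j, 0 <= b j.
Hypothesis b_growth : forall j, 10 * b j <= b (S j).
Let Th := Rpower (1 / q) (1 / lambda).
Hypothesis b_upper : forall j, b j <= l2 * exp (Th ^ S j).

(* Low frequencies, at the scale |t| = e^(-L) with Theta^(M+1) <= L/2. *)
Lemma log_hoelder_head K L M :
  0 < K -> (forall y, 1 <= y -> exp (lambda * ln y) <= K * exp (1 / 2 * y)) ->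
  1 <= L -> Th ^ S M <= L / 2 ->
  exp (- L) * b M <= l2 * K * exp (- lambda * ln L).
Proof.
  intros HK HKp HL HN.
  assert (Hl2 : 0 <= l2).
  { pose proof (b_upper 0); pose proof (b_nonneg 0); pose proof (exp_pos (Th ^ 1)). nra. }
  apply Rle_trans with (exp (- L) * (l2 * exp (L / 2))).
  { apply Rmult_le_compat_l; [left; apply exp_pos|].
    eapply Rle_trans; [apply b_upper|]. apply Rmult_le_compat_l, exp_monotone; lra. }
  replace (exp (- L) * (l2 * exp (L / 2))) with (l2 * exp (- (L / 2))).
  2: { replace (- (L / 2)) with (- L + L / 2) by field. rewrite exp_plus. ring. }
  rewrite Rmult_assoc. apply Rmult_le_compat_l; auto.
  replace (- lambda * ln L) with (- (lambda * ln L)) by ring. rewrite !exp_Ropp.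
  pose proof (HKp L HL) as X. replace (1 / 2 * L) with (L / 2) in X by field.
  pose proof (exp_pos (L / 2)); pose proof (exp_pos (lambda * ln L)).
  apply (Rmult_le_reg_r (exp (L / 2) * exp (lambda * ln L))); [nra|].
  replace (/ exp (L / 2) * (exp (L / 2) * exp (lambda * ln L))) with (exp (lambda * ln L))
    by (field; lra).
  replace (K * / exp (lambda * ln L) * (exp (L / 2) * exp (lambda * ln L)))
    with (K * exp (L / 2)) by (field; lra).
  exact X.
Qed.

Lemma log_hoelder_tail L M :
  2 <= L -> L / 2 < Th ^ S (S M) ->
  q ^ S M <= exp (lambda * (ln 2 + ln Th)) * exp (- lambda * ln L).
Proof.
  intros HL HN. pose proof (theta_gt1 q lambda q_range lambda_pos) as HT. fold Th in HT.
  rewrite (q_pow_theta q lambda) by auto. fold Th.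
  rewrite <- exp_Ropp, <- exp_plus. apply exp_monotone.
  assert (Hlog : ln (L / 2) < INR (S (S M)) * ln Th).
  { rewrite <- ln_pow by lra. apply ln_increasing; lra. }
  rewrite ln_div in Hlog by lra. rewrite ln_pow by lra. rewrite !S_INR in *.
  pose proof (Rmult_lt_compat_l lambda _ _ lambda_pos Hlog). nra.
Qed.

Lemma lacunary_log_hoelder :
  exists C h0, 0 < C /\ 0 < h0 < 1 /\ forall x t, 0 < Rabs t <= h0 ->
    Rabs (lacunary q b (x + t) - lacunary q b x) <= C * Rpower (- ln (Rabs t)) (- lambda).
Proof.
  pose proof (theta_gt1 q lambda q_range lambda_pos) as HT. fold Th in HT.
  destruct (power_le_exp (1 / 2) lambda ltac:(lra)) as [K [HK HKp]].
  assert (Hl2 : 0 <= l2).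
  { pose proof (b_upper 0); pose proof (b_nonneg 0); pose proof (exp_pos (Th ^ 1)). nra. }
  set (A := exp (lambda * (ln 2 + ln Th))).
  exists (2 * PI * l2 * K + 2 / (1 - q) * A + 1), (exp (- (2 * Th + 2))).
  pose proof PI_RGT_0. assert (0 < A) by apply exp_pos.
  assert (0 < 2 / (1 - q)) by (apply Rdiv_lt_0_compat; lra).
  assert (0 <= PI * l2 * K) by (apply Rmult_le_pos; [apply Rmult_le_pos|]; lra).
  split; [nra|]. split; [split; [apply exp_pos | rewrite <- exp_0; apply exp_increasing; lra]|].
  intros x t [Ht0 Ht].
  set (L := - ln (Rabs t)).
  assert (HtL : Rabs t = exp (- L)) by (unfold L; rewrite Ropp_involutive, exp_ln; auto).
  assert (HL : 2 * Th + 2 <= L).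
  { unfold L. apply Ropp_le_cancel. rewrite Ropp_involutive, <- (ln_exp (- (2 * Th + 2))).
    apply ln_le; auto. }
  destruct (power_bracket Th (L / 2) HT ltac:(lra)) as [[|M] [HN1 [HN2 HN3]]]; [lia|].
  eapply Rle_trans; [apply (lacunary_increment_upper q b) with (M := M); auto|].
  unfold Rpower. set (E := exp (- lambda * ln L)). assert (0 < E) by apply exp_pos.
  pose proof (log_hoelder_head K L M HK HKp ltac:(lra) HN2) as T1.
  pose proof (log_hoelder_tail L M ltac:(lra) HN3) as T2. fold A E in T1, T2.
  rewrite HtL. nra.
Qed.

End LogHoelder.

Lemma sin_shift_choice th :
  1 / 4 <= Rabs (sin (th + 2 * PI / 5) - sin th) \/
  1 / 4 <= Rabs (sin (th + -1 * (2 * PI / 5)) - sin th).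
Proof.
  pose proof PI_RGT_0.
  assert (Hs : 1 / 2 < sin (2 * PI / 5)).
  { rewrite <- sin_PI6. apply sin_increasing_1; lra. }
  assert (Hc : cos (2 * PI / 5) < 1 / 2).
  { rewrite <- cos_PI3. apply cos_decreasing_1; lra. }
  pose proof (COS_bound (2 * PI / 5)); pose proof (SIN_bound (2 * PI / 5)).
  replace (th + -1 * (2 * PI / 5)) with (th - 2 * PI / 5) by ring.
  rewrite sin_plus, sin_minus.
  set (a := 2 * PI / 5) in *. set (s := sin th). set (c := cos th).
  assert (E : s * s + c * c = 1) by (unfold s, c; rewrite <- (sin2_cos2 th); unfold Rsqr; ring).
  destruct (Rle_lt_dec (1 / 4) (Rabs (s * cos a + c * sin a - s))) as [Hp | Hp]; [left; auto|].
  destruct (Rle_lt_dec (1 / 4) (Rabs (s * cos a - c * sin a - s))) as [Hm | Hm]; [right; auto|].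
  exfalso. apply Rabs_def2 in Hp. apply Rabs_def2 in Hm.
  (* both shifts small would force  s^2 < 1/4  and  c^2 < 1/4 *)
  assert (- 1 / 4 < c * sin a < 1 / 4) by lra.
  assert (- 1 / 4 < s * (1 - cos a) < 1 / 4) by lra.
  assert ((c * sin a) * (c * sin a) < 1 / 16) by nra.
  assert ((s * (1 - cos a)) * (s * (1 - cos a)) < 1 / 16) by nra.
  assert (c * c < 1 / 4) by nra.
  assert (s * s < 1 / 4) by nra.
  lra.
Qed.

Definition best_sign (th : R) : R :=
  if Rle_dec (1 / 4) (Rabs (sin (th + 2 * PI / 5) - sin th)) then 1 else -1.

Lemma best_sign_spec th :
  (best_sign th = 1 \/ best_sign th = -1) /\
  1 / 4 <= Rabs (sin (th + best_sign th * (2 * PI / 5)) - sin th).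
Proof.
  unfold best_sign. destruct (Rle_dec _ _) as [H | H].
  - rewrite Rmult_1_l. auto.
  - split; [auto|]. destruct (sin_shift_choice th); tauto.
Qed.

Lemma is_lim_seq_exp_scaled (B a : R) (u : nat -> R) :
  0 < B -> 0 < a -> is_lim_seq u p_infty ->
  is_lim_seq (fun m => B * exp (a * u m)) p_infty.
Proof.
  intros HB Ha Hu. apply is_lim_seq_spec. intro M.
  destruct (proj2 (is_lim_seq_spec _ _) Hu (M / (B * a))) as [N HN].
  exists N. intros m Hm. specialize (HN m Hm).
  pose proof (exp_ineq1_le (a * u m)).
  apply Rcomplements.Rlt_div_l in HN; [|nra]. nra.
Qed.

Section Probes.

Variables (b : nat -> R) (x : R).
Hypothesis b0_ge1 : 1 <= b 0.
Hypothesis b_growth : forall j, 10 * b j <= b (S j).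

Lemma b_lower_linear j : INR j + 1 <= b j.
Proof.
  induction j as [|j IH]; [simpl; lra|]. rewrite S_INR. pose proof (b_growth j); pose proof (pos_INR j). lra.
Qed.

Lemma b_pos j : 0 < b j.
Proof. pose proof (b_lower_linear j); pose proof (pos_INR j). lra. Qed.

(* The probing increments  t_m = +-2/(5 b_(m+1)): they shift the phase of the
   (m+1)-th term by 2 pi/5, in the better of the two directions. *)
Definition probe (m : nat) : R := best_sign (PI * b (S m) * x) * 2 / (5 * b (S m)).

Lemma probe_abs m : Rabs (probe m) = 2 / (5 * b (S m)).
Proof.
  pose proof (b_pos (S m)). destruct (best_sign_spec (PI * b (S m) * x)) as [Hs _].
  unfold probe. unfold Rdiv. rewrite !Rabs_mult, Rabs_inv, (Rabs_pos_eq (5 * b (S m))) by lra.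
  destruct Hs as [-> | ->]; rewrite ?Rabs_R1, ?Rabs_m1, Rabs_pos_eq by lra; ring.
Qed.

Lemma probe_nonzero m : probe m <> 0.
Proof.
  intro E. pose proof (probe_abs m) as A. rewrite E, Rabs_R0 in A.
  pose proof (b_pos (S m)). assert (0 < 2 / (5 * b (S m))) by (apply Rdiv_lt_0_compat; lra).
  lra.
Qed.

Lemma probe_lim : is_lim_seq probe 0.
Proof.
  apply is_lim_seq_spec. intro eps.
  destruct (archimed_cor1 eps (cond_pos eps)) as [N [HN HN0]].
  exists N. intros n Hn. rewrite Rminus_0_r, probe_abs.
  pose proof (b_lower_linear (S n)) as HbL. rewrite S_INR in HbL.
  assert (INR N <= INR n) by (apply le_INR; auto).
  assert (0 < INR N) by (apply lt_0_INR; auto).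
  apply Rle_lt_trans with (/ INR N); [|exact HN].
  pose proof (pos_INR n).
  unfold Rdiv. rewrite Rinv_mult, <- Rmult_assoc.
  apply Rle_trans with (1 * / b (S n)).
  - apply Rmult_le_compat_r; [left; apply Rinv_0_lt_compat; lra | lra].
  - rewrite Rmult_1_l. apply Rinv_le_contravar; lra.
Qed.

End Probes.

Section NowhereHoelder.

Variables (q lambda l1 l2 : R) (b : nat -> R) (x : R).
Hypothesis q_range : 0 < q < 1.
Hypothesis lambda_pos : 0 < lambda.
Hypothesis l1_pos : 0 < l1.
Hypothesis b0_ge1 : 1 <= b 0.
Hypothesis b_growth : forall j, 10 * b j <= b (S j).
Hypothesis b_div : forall j k, exists K : nat, b (S j + k) = 10 * INR K * b j.
Let Th := Rpower (1 / q) (1 / lambda).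
Hypothesis b_bounds : forall j, l1 * exp (Th ^ S j) <= b j <= l2 * exp (Th ^ S j).

(* Along the probes, the increment of the lacunary series is at least the
   size of the (m+1)-th term, up to the contribution of the lower frequencies;
   the higher frequencies do not move at all. *)
Lemma probe_increment_lower m :
  q ^ S (S m) / 4 - 4 * PI / 5 * (b m / b (S m)) <=
    Rabs (lacunary q b (x + probe b x m) - lacunary q b x).
Proof.
  pose proof (b_pos b b0_ge1 b_growth (S m)) as Hb.
  assert (Hnonneg : forall j, 0 <= b j) by (intro j; left; apply (b_pos b b0_ge1 b_growth)).
  destruct (best_sign_spec (PI * b (S m) * x)) as [Hs Hquarter].
  eapply Rle_trans; [|apply (lacunary_increment_lower q b q_range Hnonneg b_growth x (probe b x m) m)].
  - replace (2 * PI * Rabs (probe b x m) * b m) with (4 * PI / 5 * (b m / b (S m)))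
      by (rewrite (probe_abs b x b0_ge1 b_growth); field; lra).
    apply Rplus_le_compat_r.
    unfold lac_incr. rewrite Rabs_mult, (Rabs_pos_eq (q ^ S (S m))) by (apply pow_le; lra).
    replace (PI * b (S m) * (x + probe b x m)) with
      (PI * b (S m) * x + best_sign (PI * b (S m) * x) * (2 * PI / 5))
      by (unfold probe; field; lra).
    pose proof (pow_le (q) (S (S m)) ltac:(lra)). nra.
  - intro k. destruct (b_div (S m) k) as [K HK].
    apply (lac_incr_period q b x (probe b x m) _ (2 * K)). rewrite HK, mult_INR. unfold probe.
    destruct Hs as [-> | ->]; [left | right]; simpl INR; field; lra.
Qed.

Lemma frequency_ratio_decay m :
  b m / b (S m) <= l2 / l1 * exp (- ((1 - / Th) * Th ^ S (S m))).
Proof.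
  pose proof (theta_gt1 q lambda q_range lambda_pos) as HT. fold Th in HT.
  destruct (b_bounds m) as [_ Hm2]. destruct (b_bounds (S m)) as [Hm1 _].
  pose proof (b_pos b b0_ge1 b_growth m); pose proof (b_pos b b0_ge1 b_growth (S m)).
  set (y := Th ^ S (S m)) in *.
  assert (Hym : Th ^ S m = y / Th) by (unfold y; simpl; field; lra). rewrite Hym in Hm2.
  apply Rle_trans with (l2 * exp (y / Th) / (l1 * exp y)).
  { unfold Rdiv. apply Rmult_le_compat; try lra.
    - left; apply Rinv_0_lt_compat; lra.
    - apply Rinv_le_contravar; [apply Rmult_lt_0_compat; [lra | apply exp_pos] | lra]. }
  replace (- ((1 - / Th) * y)) with (y / Th + - y) by (field; lra).
  rewrite exp_plus, exp_Ropp. right. field. split; [apply Rgt_not_eq, exp_pos | lra].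
Qed.

Lemma probe_rpower m alpha : 0 < alpha ->
  Rpower (Rabs (probe b x m)) alpha <= exp (- (alpha * (ln l1 + Th ^ S (S m)))).
Proof.
  intro Ha. rewrite (probe_abs b x b0_ge1 b_growth). destruct (b_bounds (S m)) as [Hm1 _].
  pose proof (b_pos b b0_ge1 b_growth (S m)). pose proof (exp_pos (Th ^ S (S m))).
  apply Rle_trans with (Rpower (/ (l1 * exp (Th ^ S (S m)))) alpha).
  { apply Rle_Rpower_l; [lra|]. split; [apply Rdiv_lt_0_compat; lra|].
    apply Rle_trans with (/ b (S m)).
    - unfold Rdiv. rewrite Rinv_mult, <- Rmult_assoc.
      rewrite <- (Rmult_1_l (/ b (S m))) at 2.
      apply Rmult_le_compat_r; [left; apply Rinv_0_lt_compat|]; lra.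
    - apply Rinv_le_contravar; [apply Rmult_lt_0_compat|]; lra. }
  unfold Rpower. apply exp_monotone.
  rewrite ln_Rinv, ln_mult, ln_exp by (try apply Rmult_lt_0_compat; try apply exp_pos; lra).
  lra.
Qed.

Lemma head_negligible : exists Y, forall m, Y <= Th ^ S (S m) ->
  4 * PI / 5 * (b m / b (S m)) <= q ^ S (S m) / 8.
Proof.
  pose proof (theta_gt1 q lambda q_range lambda_pos) as HT. fold Th in HT.
  set (c := 1 - / Th).
  assert (Hc : 0 < c).
  { unfold c. assert (/ Th < 1) by (rewrite <- Rinv_1; apply Rinv_lt_contravar; lra). lra. }
  destruct (power_le_exp (c / 2) lambda ltac:(lra)) as [K [HK HKp]].
  assert (Hl2 : 0 < l2) by (destruct (b_bounds 0); pose proof (b_pos b b0_ge1 b_growth 0);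
                             pose proof (exp_pos (Th ^ 1)); nra).
  set (A := 32 * PI / 5 * (l2 / l1) * K).
  assert (HA : 0 < A).
  { unfold A. pose proof PI_RGT_0. assert (0 < l2 / l1) by (apply Rdiv_lt_0_compat; lra).
    apply Rmult_lt_0_compat; [apply Rmult_lt_0_compat|]; lra. }
  exists (2 * A / c + 1). intros m Hy. set (y := Th ^ S (S m)) in *.
  set (u := exp (c / 2 * y)). assert (Hu : 0 < u) by apply exp_pos.
  assert (HuA : A <= u).
  { unfold u. pose proof (exp_ineq1_le (c / 2 * y)).
    assert (A <= c / 2 * y).
    { apply Rle_trans with (c / 2 * (2 * A / c)); [right; field; lra|].
      apply Rmult_le_compat_l; lra. }
    lra. }
  assert (Hcy : exp (- (c * y)) = / (u * u)).
  { unfold u. rewrite exp_Ropp, <- exp_plus. f_equal. f_equal. field. }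
  assert (Hq : / (K * u) <= q ^ S (S m)).
  { unfold y in *. rewrite (q_pow_theta q lambda) by auto. fold Th.
    apply Rinv_le_contravar; [apply exp_pos | apply HKp].
    assert (0 <= 2 * A / c) by (apply Rdiv_le_0_compat; lra). lra. }
  pose proof PI_RGT_0.
  apply Rle_trans with (4 * PI / 5 * (l2 / l1 * exp (- (c * y)))).
  { apply Rmult_le_compat_l; [lra | apply frequency_ratio_decay]. }
  apply Rle_trans with (/ (K * u) / 8); [|lra].
  rewrite Hcy. unfold A in HuA.
  assert (Hpos : 0 < 8 * K * u * u) by (repeat apply Rmult_lt_0_compat; lra).
  apply (Rmult_le_reg_r _ _ _ Hpos).
  replace (4 * PI / 5 * (l2 / l1 * / (u * u)) * (8 * K * u * u))
    with (32 * PI / 5 * (l2 / l1) * K) by (field; lra).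
  replace (/ (K * u) / 8 * (8 * K * u * u)) with u by (field; lra).
  lra.
Qed.

Lemma probe_quotient_lower alpha : 0 < alpha ->
  exists B Y, 0 < B /\ forall m, Y <= Th ^ S (S m) ->
    B * exp (alpha / 2 * Th ^ S (S m)) <=
      Rabs (lacunary q b (x + probe b x m) - lacunary q b x) / Rpower (Rabs (probe b x m)) alpha.
Proof.
  intro Ha. destruct head_negligible as [Y0 HY0].
  destruct (power_le_exp (alpha / 2) lambda ltac:(lra)) as [K [HK HKp]].
  exists (exp (alpha * ln l1) / (8 * K)), (Rmax Y0 1).
  split; [apply Rdiv_lt_0_compat; [apply exp_pos | lra]|].
  intros m HY. pose proof (Rmax_l Y0 1); pose proof (Rmax_r Y0 1).
  pose proof (probe_increment_lower m) as Hlow.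
  pose proof (HY0 m ltac:(lra)) as Hhead.
  pose proof (probe_rpower m alpha Ha) as Hpow.
  assert (HR : 0 < Rpower (Rabs (probe b x m)) alpha) by (unfold Rpower; apply exp_pos).
  set (y := Th ^ S (S m)) in *.
  set (D := Rabs (lacunary q b (x + probe b x m) - lacunary q b x)) in *.
  assert (Hqy : q ^ S (S m) = / exp (lambda * ln y))
    by (unfold y; rewrite (q_pow_theta q lambda) by auto; reflexivity).
  assert (HD : / exp (lambda * ln y) / 8 <= D) by (rewrite <- Hqy; lra).
  pose proof (HKp y ltac:(lra)) as HKy.
  set (e1 := exp (lambda * ln y)) in *. set (e2 := exp (alpha / 2 * y)).
  assert (0 < e1) by apply exp_pos. assert (0 < e2) by apply exp_pos.
  assert (Eexp : exp (- (alpha * (ln l1 + y))) = / (exp (alpha * ln l1) * (e2 * e2))).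
  { unfold e2. rewrite exp_Ropp, <- !exp_plus. f_equal. f_equal. field. }
  rewrite Eexp in Hpow. pose proof (exp_pos (alpha * ln l1)).
  apply (Rcomplements.Rle_div_r _ _ _ HR).
  apply Rle_trans with (exp (alpha * ln l1) / (8 * K) * e2 * / (exp (alpha * ln l1) * (e2 * e2))).
  { apply Rmult_le_compat_l; [|exact Hpow].
    apply Rmult_le_pos; [apply Rdiv_le_0_compat|]; lra. }
  apply Rle_trans with (/ e1 / 8); [|exact HD].
  replace (exp (alpha * ln l1) / (8 * K) * e2 * / (exp (alpha * ln l1) * (e2 * e2)))
    with (/ (8 * K * e2)) by (field; lra).
  fold e2 in HKy. unfold Rdiv. rewrite <- Rinv_mult. apply Rinv_le_contravar; lra.
Qed.

Lemma lacunary_nowhere_hoelder alpha : 0 < alpha ->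
  is_lim_seq (fun m => Rabs (lacunary q b (x + probe b x m) - lacunary q b x) /
                        Rpower (Rabs (probe b x m)) alpha) p_infty.
Proof.
  intro Ha. destruct (probe_quotient_lower alpha Ha) as [B [Y [HB HBY]]].
  pose proof (theta_gt1 q lambda q_range lambda_pos) as HT. fold Th in HT.
  assert (Hy : is_lim_seq (fun m => Th ^ S (S m)) p_infty).
  { eapply is_lim_seq_ext.
    2: apply (proj1 (is_lim_seq_incr_n (fun m => Th ^ m) 2 p_infty) (is_lim_seq_geom_p Th HT)).
    intro n. cbv beta. rewrite Nat.add_comm. reflexivity. }
  apply (is_lim_seq_le_p_loc (fun m => B * exp (alpha / 2 * Th ^ S (S m)))).
  - destruct (proj2 (is_lim_seq_spec _ _) Hy Y) as [N HN].
    exists N. intros m Hm. apply HBY. left. apply HN, Hm.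
  - apply is_lim_seq_exp_scaled; auto. lra.
Qed.

End NowhereHoelder.

(* A log-Hoelder bound at scale |t| persists at every larger scale s <= h0,
   since  s |-> (-ln s)^(-lambda)  is increasing on (0, 1). *)
Lemma log_hoelder_monotone (P : R -> R) C h0 lambda :
  0 < C -> 0 < h0 < 1 -> 0 < lambda ->
  (forall x t, 0 < Rabs t <= h0 ->
     Rabs (P (x + t) - P x) <= C * Rpower (- ln (Rabs t)) (- lambda)) ->
  forall x t s, Rabs t <= s -> 0 < s <= h0 ->
  Rabs (P (x + t) - P x) <= C * Rpower (- ln s) (- lambda).
Proof.
  intros HC Hh0 Hl HP x t s Hts Hs.
  assert (Hlns : 0 < - ln s) by (assert (ln s < 0) by (rewrite <- ln_1; apply ln_increasing; lra); lra).
  assert (0 < Rpower (- ln s) (- lambda)) by (unfold Rpower; apply exp_pos).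
  destruct (Req_dec t 0) as [-> | Ht].
  - rewrite Rplus_0_r, Rminus_diag, Rabs_R0. nra.
  - assert (Hta : 0 < Rabs t) by (apply Rabs_pos_lt; auto).
    eapply Rle_trans; [apply HP; lra|].
    apply Rmult_le_compat_l; [lra|]. unfold Rpower. apply exp_monotone.
    assert (- ln s <= - ln (Rabs t)) by (apply Ropp_le_contravar, ln_le; lra).
    assert (ln (- ln s) <= ln (- ln (Rabs t))) by (apply ln_le; lra).
    nra.
Qed.

Lemma supnorm_coord h : Rabs (coord h 0) <= supnorm h /\ Rabs (coord h 3) <= supnorm h.
Proof.
  destruct h as [[[a b] c] d]; cbn [supnorm coord]. split.
  - apply Rle_trans with (Rmax (Rabs a) (Rabs b)); apply Rmax_l.
  - apply Rle_trans with (Rmax (Rabs c) (Rabs d)); apply Rmax_r.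
Qed.

Section PH.

Variables (q : R) (Q : nat -> nat).
Hypothesis q_range : 0 < q < 1.
Hypothesis Q_ge1 : forall j, 1 <= INR (Q (S j)).

Definition ph_coef (j : nat) : R := q ^ S j / INR (Q (S j)) ^ 6.
Definition ph_freq (j : nat) : R := PI * INR (Q (S j)).
Definition ph_profile (k : nat) : R -> R := sine_series ph_coef ph_freq k.

Lemma ph_coef_bound k j : (k <= 6)%nat -> Rabs (ph_coef j * ph_freq j ^ k) <= PI ^ 6 * q ^ S j.
Proof.
  intros Hk. unfold ph_coef, ph_freq. specialize (Q_ge1 j). set (y := INR (Q (S j))) in *.
  pose proof PI_RGT_0. assert (HPI1 : 1 <= PI) by (pose proof PI2_1; lra).
  assert (Hqj : 0 < q ^ S j) by (apply pow_lt; lra).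
  rewrite Rpow_mult_distr.
  replace (q ^ S j / y ^ 6 * (PI ^ k * y ^ k)) with (q ^ S j * PI ^ k * (y ^ k / y ^ 6))
    by (field; lra).
  assert (H1 : y ^ k / y ^ 6 <= 1).
  { apply Rcomplements.Rle_div_l; [apply pow_lt; lra|]. rewrite Rmult_1_l. apply Rle_pow; auto. }
  assert (H0 : 0 <= y ^ k / y ^ 6) by (apply Rdiv_le_0_compat; [apply pow_le | apply pow_lt]; lra).
  assert (HP : PI ^ k <= PI ^ 6) by (apply Rle_pow; auto).
  assert (0 <= PI ^ k) by (apply pow_le; lra).
  rewrite Rabs_pos_eq by (apply Rmult_le_pos; [apply Rmult_le_pos|]; lra).
  rewrite (Rmult_comm (PI ^ 6)), Rmult_assoc. apply Rmult_le_compat_l; [lra|].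
  replace (PI ^ 6) with (PI ^ 6 * 1) by ring. apply Rmult_le_compat; lra.
Qed.

Lemma ph_coef_summable k : (k <= 6)%nat -> ex_series (fun j => Rabs (ph_coef j * ph_freq j ^ k)).
Proof.
  intros Hk. apply (ex_series_Rabs_le _ (fun j => PI ^ 6 * q ^ S j)).
  - intro j. rewrite Rabs_Rabsolu. apply ph_coef_bound, Hk.
  - apply (@ex_series_scal_l R_AbsRing R_NormedModule), ex_series_geom_succ, q_range.
Qed.

Lemma ph_profile_is_derive k x : (k < 6)%nat -> is_derive (ph_profile k) x (ph_profile (S k) x).
Proof. intros. apply sine_series_is_derive; apply ph_coef_summable; lia. Qed.

Lemma ph_profile_continuity k x : (k <= 6)%nat -> continuity_pt (ph_profile k) x.
Proof. intros. apply sine_series_continuity, ph_coef_summable; lia. Qed.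

Lemma PH_separable p : PH q Q p = ph_profile 0 (coord p 0) + ph_profile 0 (coord p 3).
Proof.
  unfold PH, ph_profile, sine_series, series1, sine_term, ph_coef, ph_freq.
  f_equal; apply Series_ext; intro j; simpl INR; rewrite Rmult_0_l, Rplus_0_r; simpl pow; ring.
Qed.

Lemma ph_profile_6 x : ph_profile 6 x = - PI ^ 6 * lacunary q (fun j => INR (Q (S j))) x.
Proof.
  unfold ph_profile, sine_series, lacunary. rewrite <- Series_scal_l. apply Series_ext. intro j.
  unfold sine_term, ph_coef, ph_freq.
  replace (PI * INR (Q (S j)) * x + INR 6 * (PI / 2)) with
      (((PI * INR (Q (S j)) * x + PI) + PI) + PI) by (simpl; field).
  rewrite !neg_sin. specialize (Q_ge1 j). field. lra.
Qed.

Lemma PH_C6 : C_k4 6 (PH q Q).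
Proof.
  apply (separable_C_k4 6 _ ph_profile ph_profile_is_derive PH_separable ph_profile_continuity).
Qed.

Lemma PH_sixth_increment w z h :
  valid_word w -> length w = 6%nat ->
  Rabs (iter_pd w (PH q Q) (add4 z h) - iter_pd w (PH q Q) z) <=
    PI ^ 6 * (Rabs (lacunary q (fun j => INR (Q (S j))) (coord z 0 + coord h 0)
                    - lacunary q (fun j => INR (Q (S j))) (coord z 0)) +
              Rabs (lacunary q (fun j => INR (Q (S j))) (coord z 3 + coord h 3)
                    - lacunary q (fun j => INR (Q (S j))) (coord z 3))).
Proof.
  intros Hv Hl.
  eapply Rle_trans.
  { apply (iter_pd_separable_increment 6 _ ph_profile ph_profile_is_derive PH_separable);
      [exact Hv | lia]. }
  rewrite Hl, !ph_profile_6.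
  replace (coord (add4 z h) 0) with (coord z 0 + coord h 0)
    by (destruct z as [[[? ?] ?] ?], h as [[[? ?] ?] ?]; reflexivity).
  replace (coord (add4 z h) 3) with (coord z 3 + coord h 3)
    by (destruct z as [[[? ?] ?] ?], h as [[[? ?] ?] ?]; reflexivity).
  rewrite <- !Rmult_minus_distr_l, !Rabs_mult, Rabs_Ropp, Rabs_pos_eq
    by (apply pow_le; pose proof PI_RGT_0; lra).
  right. ring.
Qed.

Lemma PH_sixth_x1 p : iter_pd (repeat 0%nat 6) (PH q Q) p = - PI ^ 6 * Pfun q Q (coord p 0).
Proof.
  assert (Hv : valid_word (repeat 0%nat 6)).
  { unfold valid_word. simpl. repeat (constructor; [lia|]). constructor. }
  rewrite (iter_pd_separable 6 _ ph_profile ph_profile_is_derive PH_separable _ p Hv)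
    by (simpl; lia).
  simpl length. rewrite !ph_profile_6. simpl word_weight. unfold Pfun, series1, lacunary. ring.
Qed.

End PH.

Section Frequencies.

Variables (Q : nat -> nat).
Hypothesis Q_mult10 : forall n, (1 <= n)%nat -> exists k, (1 <= k)%nat /\ Q n = (10 * k)%nat.
Hypothesis Q_ratio : forall n, (1 <= n)%nat ->
  exists k, (1 <= k)%nat /\ Q (S n) = (10 * k * Q n)%nat.

Lemma freq_ge10 j : 10 <= INR (Q (S j)).
Proof.
  destruct (Q_mult10 (S j) ltac:(lia)) as [k [Hk E]]. rewrite E, mult_INR.
  assert (1 <= INR k) by (apply (le_INR 1); auto). simpl INR at 1. lra.
Qed.

Lemma freq_growth j : 10 * INR (Q (S j)) <= INR (Q (S (S j))).
Proof.
  destruct (Q_ratio (S j) ltac:(lia)) as [k [Hk E]]. rewrite E, !mult_INR.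
  assert (1 <= INR k) by (apply (le_INR 1); auto).
  pose proof (pos_INR (Q (S j))). simpl (INR 10). nra.
Qed.

Lemma freq_divisibility j k :
  exists K : nat, INR (Q (S (S j + k))) = 10 * INR K * INR (Q (S j)).
Proof.
  induction k as [|k [K HK]].
  - destruct (Q_ratio (S j) ltac:(lia)) as [k0 [_ E]]. exists k0.
    rewrite Nat.add_0_r, E, !mult_INR. simpl. ring.
  - destruct (Q_ratio (S (S j + k)) ltac:(lia)) as [k1 [_ E]].
    exists (10 * k1 * K)%nat. replace (S (S j + S k)) with (S (S (S j + k))) by lia.
    rewrite E, !mult_INR, HK. simpl. ring.
Qed.

End Frequencies.

Lemma PH_log_hoelder q lambda l2 (Q : nat -> nat) :
  0 < q < 1 -> 0 < lambda ->
  (forall j, 1 <= INR (Q (S j))) ->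
  (forall j, 10 * INR (Q (S j)) <= INR (Q (S (S j)))) ->
  (forall j, INR (Q (S j)) <= l2 * exp (Rpower (1 / q) (1 / lambda) ^ S j)) ->
  exists C h0, 0 < C /\ 0 < h0 < 1 /\
    forall w z h, valid_word w -> length w = 6%nat -> 0 < supnorm h <= h0 ->
      Rabs (iter_pd w (PH q Q) (add4 z h) - iter_pd w (PH q Q) z)
        <= C * Rpower (- ln (supnorm h)) (- lambda).
Proof.
  intros Hq Hl Hb1 Hgrowth Hupper.
  assert (Hb0 : forall j, 0 <= INR (Q (S j))) by (intro j; specialize (Hb1 j); lra).
  destruct (lacunary_log_hoelder q lambda l2 _ Hq Hl Hb0 Hgrowth Hupper)
    as [C [h0 [HC [Hh0 HP]]]].
  exists (2 * PI ^ 6 * C), h0. pose proof (pow_lt PI 6 PI_RGT_0).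
  split; [nra|]. split; [exact Hh0|].
  intros w z h Hv Hlen Hh. destruct (supnorm_coord h) as [S0 S3].
  eapply Rle_trans; [apply (PH_sixth_increment q Q Hq Hb1 w z h Hv Hlen)|].
  pose proof (log_hoelder_monotone _ _ _ lambda HC Hh0 Hl HP (coord z 0) _ _ S0 Hh) as B0.
  pose proof (log_hoelder_monotone _ _ _ lambda HC Hh0 Hl HP (coord z 3) _ _ S3 Hh) as B3.
  apply Rle_trans with (PI ^ 6 * (C * Rpower (- ln (supnorm h)) (- lambda) * 2)).
  - apply Rmult_le_compat_l; lra.
  - right. ring.
Qed.

Theorem mainTheorem7 (q lambda l1 l2 : R) (Q : nat -> nat) :
  0 < q < 1 / 3 ->
  1 < lambda ->
  (forall n, (1 <= n)%nat -> exists k, (1 <= k)%nat /\ Q n = (10 * k)%nat) ->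
  (forall n, (1 <= n)%nat -> exists k, (1 <= k)%nat /\ Q (S n) = (10 * k * Q n)%nat) ->
  0 < l1 <= l2 ->
  (forall n, (1 <= n)%nat ->
     l1 * exp (Rpower (1 / q) (1 / lambda) ^ n) <= INR (Q n) /\
     INR (Q n) <= l2 * exp (Rpower (1 / q) (1 / lambda) ^ n)) ->
  C_k4 6 (PH q Q) /\
  (exists C h0, 0 < C /\ 0 < h0 < 1 /\
     forall w z h, valid_word w -> length w = 6%nat ->
       0 < supnorm h <= h0 ->
       Rabs (iter_pd w (PH q Q) (add4 z h) - iter_pd w (PH q Q) z)
         <= C * Rpower (- ln (supnorm h)) (- lambda)) /\
  (forall p, iter_pd (repeat 0%nat 6) (PH q Q) p = - PI ^ 6 * Pfun q Q (coord p 0)) /\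
  (forall x alpha, 0 < alpha < 1 ->
     exists v : nat -> R, (forall m, v m <> 0) /\ is_lim_seq v 0 /\
       is_lim_seq (fun m => Rabs (Pfun q Q (x + v m) - Pfun q Q x) / Rpower (Rabs (v m)) alpha)
         p_infty).
Proof.
  intros Hq Hl HQ1 HQ2 Hl12 Hg.
  set (b := fun j => INR (Q (S j))).
  assert (Hq1 : 0 < q < 1) by lra.
  assert (Hb1 : forall j, 1 <= b j) by (intro j; unfold b; pose proof (freq_ge10 Q HQ1 j); lra).
  assert (Hgrowth := freq_growth Q HQ2).
  assert (Hbounds : forall j, l1 * exp (Rpower (1 / q) (1 / lambda) ^ S j) <= b j <=
                              l2 * exp (Rpower (1 / q) (1 / lambda) ^ S j))
    by (intro j; apply Hg; lia).
  split; [|split; [|split]].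
  - exact (PH_C6 q Q Hq1 Hb1).
  - apply (PH_log_hoelder q lambda l2 Q Hq1 ltac:(lra) Hb1 Hgrowth).
    intro j. apply Hbounds.
  - exact (PH_sixth_x1 q Q Hq1 Hb1).
  - intros x alpha Ha.
    pose proof (freq_divisibility Q HQ2) as Hdiv.
    exists (probe b x). split; [|split].
    + exact (probe_nonzero b x (Hb1 0%nat) Hgrowth).
    + exact (probe_lim b x (Hb1 0%nat) Hgrowth).
    + exact (lacunary_nowhere_hoelder q lambda l1 l2 b x Hq1 ltac:(lra) ltac:(lra) (Hb1 0%nat)
               Hgrowth Hdiv Hbounds alpha ltac:(lra)).
Qed.
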